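(* Fix a $\odot$-independence and let $(\mathcal B,\Delta)$ be a dual semigroup. Let $\mathrm T(\mathcal B)$ be the tensor $*$-algebra over $\mathcal B$ (viewed as a $*$-vector space) with natural embedding $i_{\mathcal B}:\mathcal B\to\mathrm T(\mathcal B)$, let $\mathrm T(\Delta):\mathrm T(\mathcal B)\to\mathrm T(\mathcal B)\sqcup\mathrm T(\mathcal B)$ be the unique $*$-homomorphism extending $(i_{\mathcal B}\amalg i_{\mathcal B})\circ\Delta:\mathcal B\to\mathrm T(\mathcal B)\sqcup\mathrm T(\mathcal B)$, so that $(\mathrm T(\mathcal B),\mathrm T(\Delta))$ is a dual semigroup, and let $M:\mathrm T(\mathcal B)\to\mathcal B$ be the multiplication map $b_1\otimes\cdots\otimes b_n\mapsto b_1\cdots b_n$. Then for all linear functionals $\phi_1,\phi_2,\psi$ on $\mathcal B$: (a) $(\phi_1\circ M)\star_{\mathrm T(\Delta)}(\phi_2\circ M)=(\phi_1\star_\Delta\phi_2)\circ M$; (b) $\exp_{\star\mathrm T(\Delta)}(\psi\circ M)=(\exp_{\star\Delta}\psi)\circ M$; (c) $\exp_{\star\mathrm T(\Delta)}(\psi\circ M)$ vanishes on the two-sided $*$-ideal $\ker M$. Here $\star_\Delta$, $\exp_{\star\Delta}$ refer to $(\mathcal B,\Delta)$ and $\star_{\mathrm T(\Delta)}$, $\exp_{\star\mathrm T(\Delta)}$ to $(\mathrm T(\mathcal B),\mathrm T(\Delta))$.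
   Context: $\sqcup$ is the non-unital free product of algebras (coproduct) with embeddings $i_1,i_2$; for homomorphisms $j_k:\mathcal B_k\to\mathcal A_k$, $j_1\amalg j_2:\mathcal B_1\sqcup\mathcal B_2\to\mathcal A_1\sqcup\mathcal A_2$ is the induced homomorphism. A dual semigroup is a $*$-algebra $\mathcal B$ with a $*$-homomorphism $\Delta:\mathcal B\to\mathcal B\sqcup\mathcal B$ such that $(\Delta\amalg\mathrm{id})\Delta=(\mathrm{id}\amalg\Delta)\Delta$ and $(0\sqcup\mathrm{id})\Delta=\mathrm{id}=(\mathrm{id}\sqcup0)\Delta$. The tensor $*$-algebra $\mathrm T(\mathcal V)=\bigoplus_{n\ge1}\mathcal V^{\otimes n}$ over a $*$-vector space has concatenation product and involution $(v_1\otimes\cdots\otimes v_n)^*=v_n^*\otimes\cdots\otimes v_1^*$. A $\odot$-independence is a product of linear functionals on free products satisfying (A1) $(\phi_1\odot\phi_2)\circ i_k=\phi_k$, (A2) associativity, (A3) $(\phi_1\circ j_1)\odot(\phi_2\circ j_2)=(\phi_1\odot\phi_2)\circ(j_1\amalg j_2)$. Convolution: $\phi_1\star\phi_2=(\phi_1\odot\phi_2)\circ\Delta$. Convolution exponential $\exp_\star\psi$: restriction to $\mathcal B$ of the coalgebra exponential $\sum_n D(\psi)^{\star n}/n!$ on the commutative $*$-bialgebra $\mathrm S(\mathcal B)$ associated with the independence and $\Delta$ (where $D(\psi)$ equals $\psi$ on $\mathcal B$ and vanishes on $\mathbf 1$ and on higher symmetric tensors); equivalently, $\exp_\star\psi$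 is the pointwise limit of $(\psi/n)^{\star n}$. *)

From Stdlib Require Import Reals List ClassicalEpsilon.
Set Implicit Arguments.
Unset Strict Implicit.
Open Scope R_scope.

Record Cx : Type := mkC { Cre : R ; Cim : R }.
Definition C0 : Cx := mkC 0 0.
Definition C1 : Cx := mkC 1 0.
Definition CR (r : R) : Cx := mkC r 0.
Definition Cadd (a b : Cx) : Cx := mkC (Cre a + Cre b) (Cim a + Cim b).
Definition Cmul (a b : Cx) : Cx :=
  mkC (Cre a * Cre b - Cim a * Cim b) (Cre a * Cim b + Cim a * Cre b).
Definition Cconj (a : Cx) : Cx := mkC (Cre a) (- Cim a).

Definition Ccv (u : nat -> Cx) (l : Cx) : Prop :=
  Un_cv (fun n => Cre (u n)) (Cre l) /\ Un_cv (fun n => Cim (u n)) (Cim l).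

Record StarAlg : Type := {
  car :> Type;
  azero : car;
  aadd : car -> car -> car;
  aopp : car -> car;
  ascal : Cx -> car -> car;
  amul : car -> car -> car;
  astar : car -> car;
  aaddA : forall x y z, aadd x (aadd y z) = aadd (aadd x y) z;
  aaddC : forall x y, aadd x y = aadd y x;
  aadd0 : forall x, aadd azero x = x;
  aaddN : forall x, aadd (aopp x) x = azero;
  ascalDl : forall a b x, ascal (Cadd a b) x = aadd (ascal a x) (ascal b x);
  ascalDr : forall a x y, ascal a (aadd x y) = aadd (ascal a x) (ascal a y);
  ascalA : forall a b x, ascal (Cmul a b) x = ascal a (ascal b x);
  ascal1 : forall x, ascal C1 x = x;
  amulA : forall x y z, amul x (amul y z) = amul (amul x y) z;
  amulDl : forall x y z, amul (aadd x y) z = aadd (amul x z) (amul y z);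
  amulDr : forall x y z, amul x (aadd y z) = aadd (amul x y) (amul x z);
  amulZl : forall a x y, amul (ascal a x) y = ascal a (amul x y);
  amulZr : forall a x y, amul x (ascal a y) = ascal a (amul x y);
  astarD : forall x y, astar (aadd x y) = aadd (astar x) (astar y);
  astarZ : forall a x, astar (ascal a x) = ascal (Cconj a) (astar x);
  astarK : forall x, astar (astar x) = x;
  astarM : forall x y, astar (amul x y) = amul (astar y) (astar x)
}.
Arguments azero {s}.
Arguments aadd {s}.
Arguments aopp {s}.
Arguments ascal {s}.
Arguments amul {s}.
Arguments astar {s}.

Definition is_linear (A D : StarAlg) (f : A -> D) : Prop :=
  (forall x y, f (aadd x y) = aadd (f x) (f y)) /\
  (forall a x, f (ascal a x) = ascal a (f x)).
Definition is_lfunc (A : StarAlg) (f : A -> Cx) : Prop :=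
  (forall x y, f (aadd x y) = Cadd (f x) (f y)) /\
  (forall a x, f (ascal a x) = Cmul a (f x)).
Definition is_ahom (A D : StarAlg) (f : A -> D) : Prop :=
  is_linear f /\ (forall x y, f (amul x y) = amul (f x) (f y)).
Definition is_shom (A D : StarAlg) (f : A -> D) : Prop :=
  is_ahom f /\ (forall x, f (astar x) = astar (f x)).

(** * Non-unital free product (coproduct) of *-algebras, by its universal
    property (in the category of algebras; the embeddings are *-homs). *)
Record FreeProduct : Type := {
  fp : StarAlg -> StarAlg -> StarAlg;
  fp_i1 : forall A1 A2 : StarAlg, A1 -> fp A1 A2;
  fp_i2 : forall A1 A2 : StarAlg, A2 -> fp A1 A2;
  fp_copair : forall (A1 A2 D : StarAlg), (A1 -> D) -> (A2 -> D) -> fp A1 A2 -> D;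
  fp_i1_shom : forall A1 A2 : StarAlg, is_shom (@fp_i1 A1 A2);
  fp_i2_shom : forall A1 A2 : StarAlg, is_shom (@fp_i2 A1 A2);
  fp_copair_ahom : forall (A1 A2 D : StarAlg) (f1 : A1 -> D) (f2 : A2 -> D),
      is_ahom f1 -> is_ahom f2 -> is_ahom (fp_copair f1 f2);
  fp_copair_i1 : forall (A1 A2 D : StarAlg) (f1 : A1 -> D) (f2 : A2 -> D),
      is_ahom f1 -> is_ahom f2 -> forall a, fp_copair f1 f2 (fp_i1 A2 a) = f1 a;
  fp_copair_i2 : forall (A1 A2 D : StarAlg) (f1 : A1 -> D) (f2 : A2 -> D),
      is_ahom f1 -> is_ahom f2 -> forall a, fp_copair f1 f2 (fp_i2 A1 a) = f2 a;
  fp_copair_uniq : forall (A1 A2 D : StarAlg) (f1 : A1 -> D) (f2 : A2 -> D) (g : fp A1 A2 -> D),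
      is_ahom f1 -> is_ahom f2 -> is_ahom g ->
      (forall a, g (fp_i1 A2 a) = f1 a) -> (forall a, g (fp_i2 A1 a) = f2 a) ->
      forall x, g x = fp_copair f1 f2 x
}.
Arguments fp_i1 {f A1} A2.
Arguments fp_i2 {f} A1 {A2}.
Arguments fp_copair {f A1 A2 D}.

Definition fpmap (FP : FreeProduct) (B1 B2 A1 A2 : StarAlg)
  (j1 : B1 -> A1) (j2 : B2 -> A2) : fp FP B1 B2 -> fp FP A1 A2 :=
  fp_copair (fun b => fp_i1 A2 (j1 b)) (fun b => fp_i2 A1 (j2 b)).

Definition fp_assoc (FP : FreeProduct) (A1 A2 A3 : StarAlg) :
  fp FP A1 (fp FP A2 A3) -> fp FP (fp FP A1 A2) A3 :=
  fp_copair (fun a => fp_i1 A3 (fp_i1 A2 a))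
            (fp_copair (fun a => fp_i1 A3 (fp_i2 A1 a)) (fun a => fp_i2 (fp FP A1 A2) a)).

Record Independence (FP : FreeProduct) : Type := {
  odot : forall A1 A2 : StarAlg, (A1 -> Cx) -> (A2 -> Cx) -> fp FP A1 A2 -> Cx;
  odot_lfunc : forall (A1 A2 : StarAlg) (p1 : A1 -> Cx) (p2 : A2 -> Cx),
      is_lfunc p1 -> is_lfunc p2 -> is_lfunc (odot p1 p2);
  odot_A1_1 : forall (A1 A2 : StarAlg) (p1 : A1 -> Cx) (p2 : A2 -> Cx),
      is_lfunc p1 -> is_lfunc p2 -> forall a, odot p1 p2 (fp_i1 A2 a) = p1 a;
  odot_A1_2 : forall (A1 A2 : StarAlg) (p1 : A1 -> Cx) (p2 : A2 -> Cx),
      is_lfunc p1 -> is_lfunc p2 -> forall a, odot p1 p2 (fp_i2 A1 a) = p2 a;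
  odot_A2 : forall (A1 A2 A3 : StarAlg) (p1 : A1 -> Cx) (p2 : A2 -> Cx) (p3 : A3 -> Cx),
      is_lfunc p1 -> is_lfunc p2 -> is_lfunc p3 ->
      forall x, odot (odot p1 p2) p3 (fp_assoc x) = odot p1 (odot p2 p3) x;
  odot_A3 : forall (B1 B2 A1 A2 : StarAlg) (j1 : B1 -> A1) (j2 : B2 -> A2)
      (p1 : A1 -> Cx) (p2 : A2 -> Cx),
      is_ahom j1 -> is_ahom j2 -> is_lfunc p1 -> is_lfunc p2 ->
      forall x, odot (fun b => p1 (j1 b)) (fun b => p2 (j2 b)) x
                = odot p1 p2 (fpmap j1 j2 x)
}.
Arguments odot {FP} i {A1 A2}.

Definition is_dual_semigroup (FP : FreeProduct) (B : StarAlg)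
  (Delta : B -> fp FP B B) : Prop :=
  is_shom Delta /\
  (forall b, fpmap Delta (fun x => x) (Delta b)
             = fp_assoc (fpmap (fun x => x) Delta (Delta b))) /\
  (forall b, fp_copair (fun _ => azero) (fun x => x) (Delta b) = b) /\
  (forall b, fp_copair (fun x => x) (fun _ => azero) (Delta b) = b).

Definition conv (FP : FreeProduct) (I : Independence FP) (B : StarAlg)
  (Delta : B -> fp FP B B) (p1 p2 : B -> Cx) : B -> Cx :=
  fun b => odot I p1 p2 (Delta b).

(** cpow n p = p^{⋆(n+1)} *)
Fixpoint cpow (FP : FreeProduct) (I : Independence FP) (B : StarAlg)
  (Delta : B -> fp FP B B) (n : nat) (p : B -> Cx) : B -> Cx :=
  match n with
  | O => p
  | S k => conv I Delta (cpow I Delta k p) p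
  end.

(** (p/(n+1))^{⋆(n+1)} evaluated at b *)
Definition exp_seq (FP : FreeProduct) (I : Independence FP) (B : StarAlg)
  (Delta : B -> fp FP B B) (p : B -> Cx) (b : B) : nat -> Cx :=
  fun n => cpow I Delta n (fun x => Cmul (CR (/ INR (S n))) (p x)) b.

Definition exp_star (FP : FreeProduct) (I : Independence FP) (B : StarAlg)
  (Delta : B -> fp FP B B) (p : B -> Cx) : B -> Cx :=
  fun b => epsilon (inhabits C0) (fun l => Ccv (exp_seq I Delta p b) l).

(** * Tensor *-algebra T(V) over the *-vector space underlying B,
    by its universal property (free non-unital algebra on the vector space),
    with the involution making the embedding *-preserving. *)
Record TensorAlg (B : StarAlg) : Type := {
  TA : StarAlg;
  t_i : B -> TA;
  t_i_linear : is_linear t_i;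
  t_i_star : forall b, t_i (astar b) = astar (t_i b);
  t_ext : forall D : StarAlg, (B -> D) -> TA -> D;
  t_ext_ahom : forall (D : StarAlg) (f : B -> D), is_linear f -> is_ahom (t_ext f);
  t_ext_i : forall (D : StarAlg) (f : B -> D), is_linear f -> forall b, t_ext f (t_i b) = f b;
  t_ext_uniq : forall (D : StarAlg) (f : B -> D) (g : TA -> D), is_linear f -> is_ahom g ->
      (forall b, g (t_i b) = f b) -> forall x, g x = t_ext f x
}.
Arguments t_i {B} t.

(** alternating words in A ⊔ A; letters (true, a) lie in the first copy *)
Definition fp_inj (FP : FreeProduct) (A : StarAlg) (x : bool * A) : fp FP A A :=
  if fst x then fp_i1 A (snd x) else fp_i2 A (snd x).

Fixpoint wprod (FP : FreeProduct) (A : StarAlg) (x0 : bool * A) (l : list (bool * A))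
  : fp FP A A :=
  match l with
  | nil => fp_inj FP x0
  | y :: l' => amul (fp_inj FP x0) (wprod FP y l')
  end.

Fixpoint alternating (A : Type) (x0 : bool * A) (l : list (bool * A)) : Prop :=
  match l with
  | nil => True
  | y :: l' => fst x0 <> fst y /\ alternating y l'
  end.

(** the linear map j1 ∐ j2 : A ⊔ A -> D ⊔ D induced by a linear (not necessarily
    multiplicative) map j : A -> D, acting letterwise on alternating words *)
Definition is_fp_linmap (FP : FreeProduct) (A D : StarAlg) (j : A -> D)
  (L : fp FP A A -> fp FP D D) : Prop :=
  is_linear L /\
  forall x0 l, alternating x0 l ->
    L (wprod FP x0 l) = wprod FP (fst x0, j (snd x0)) (map (fun y => (fst y, j (snd y))) l).

From Stdlib Require Import Reals List ClassicalEpsilon FunctionalExtensionality ProofIrrelevance Lra.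

Set Implicit Arguments.
Unset Strict Implicit.

(* The multiplication map M intertwines the comultiplications: (M ∐ M) ∘ T(Δ) = Δ ∘ M,
   because both sides are homomorphisms on T(B) that agree on B.  On B this amounts to
   (M ∐ M) ∘ (i_B ∐ i_B) = id on B ⊔ B, which holds on alternating words and hence
   everywhere, since B ⊔ B is spanned by them.  By (A3), convolution is then natural along
   M, and so are the convolution powers (ψ/n)^{⋆n} and their limit exp_⋆ ψ.  Finally each
   (ψ/n)^{⋆n} is linear, so (exp_⋆ ψ)(M t) = (exp_⋆ ψ)(0) = 0 whenever M t = 0. *)

Lemma aadd_idem_eq0 (A : StarAlg) (x : A) : aadd x x = x -> x = azero.
Proof.
  intro H. transitivity (aadd (aadd (aopp x) x) x).
  - rewrite aaddN, aadd0. reflexivity.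
  - rewrite <- aaddA, H. apply aaddN.
Qed.

Lemma aadd_eq0_opp (A : StarAlg) (a b : A) : aadd a b = azero -> a = aopp b.
Proof.
  intro H. transitivity (aadd (aadd a b) (aopp b)).
  - rewrite <- aaddA, (aaddC b), aaddN, aaddC, aadd0. reflexivity.
  - rewrite H, aadd0. reflexivity.
Qed.

Section Additive.
Context {A D : StarAlg} {f : A -> D}.
Hypothesis f_add : forall x y, f (aadd x y) = aadd (f x) (f y).

Lemma additive0 : f azero = azero.
Proof. apply aadd_idem_eq0. rewrite <- f_add, aadd0. reflexivity. Qed.

Lemma additiveN x : f (aopp x) = aopp (f x).
Proof. apply aadd_eq0_opp. rewrite <- f_add, aaddN. exact additive0. Qed.
End Additive.

Section MulZeroOpp.
Variables (A : StarAlg) (x y : A).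

Lemma amul0r : amul azero x = azero.
Proof. apply (additive0 (f := fun z => amul z x)). intros; apply amulDl. Qed.

Lemma amulr0 : amul x azero = azero.
Proof. apply (additive0 (f := fun z => amul x z)). intros; apply amulDr. Qed.

Lemma amulNr : amul (aopp x) y = aopp (amul x y).
Proof. apply (additiveN (f := fun z => amul z y)). intros; apply amulDl. Qed.

Lemma amulrN : amul x (aopp y) = aopp (amul x y).
Proof. apply (additiveN (f := fun z => amul x z)). intros; apply amulDr. Qed.
End MulZeroOpp.

Lemma is_ahom_id (A : StarAlg) : is_ahom (fun x : A => x).
Proof. split; [split|]; intros; reflexivity. Qed.

Lemma is_ahom_comp (A D E : StarAlg) (f : A -> D) (g : D -> E) :
  is_ahom f -> is_ahom g -> is_ahom (fun x => g (f x)).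
Proof.
  intros [[f1 f2] f3] [[g1 g2] g3]. split; [split|]; intros;
  [rewrite f1, g1 | rewrite f2, g2 | rewrite f3, g3]; reflexivity.
Qed.

Section SubStarAlg.
Variables (A : StarAlg) (P : A -> Prop).
Hypothesis P0 : P azero.
Hypothesis Padd : forall x y, P x -> P y -> P (aadd x y).
Hypothesis Popp : forall x, P x -> P (aopp x).
Hypothesis Pscal : forall a x, P x -> P (ascal a x).
Hypothesis Pmul : forall x y, P x -> P y -> P (amul x y).
Hypothesis Pstar : forall x, P x -> P (astar x).

Lemma sub_val_inj (u v : {x : A | P x}) : proj1_sig u = proj1_sig v -> u = v.
Proof. destruct u, v; simpl; intros ->; f_equal; apply proof_irrelevance. Qed.

Definition sub_star_alg : StarAlg.
Proof.
  refine (@Build_StarAlg {x : A | P x} (exist _ azero P0)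
    (fun u v => exist _ (aadd (proj1_sig u) (proj1_sig v)) (Padd (proj2_sig u) (proj2_sig v)))
    (fun u => exist _ (aopp (proj1_sig u)) (Popp (proj2_sig u)))
    (fun a u => exist _ (ascal a (proj1_sig u)) (Pscal a (proj2_sig u)))
    (fun u v => exist _ (amul (proj1_sig u) (proj1_sig v)) (Pmul (proj2_sig u) (proj2_sig v)))
    (fun u => exist _ (astar (proj1_sig u)) (Pstar (proj2_sig u)))
    _ _ _ _ _ _ _ _ _ _ _ _ _ _ _ _ _); intros; apply sub_val_inj; simpl.
  - apply aaddA. - apply aaddC. - apply aadd0. - apply aaddN. - apply ascalDl.
  - apply ascalDr. - apply ascalA. - apply ascal1. - apply amulA. - apply amulDl.
  - apply amulDr. - apply amulZl. - apply amulZr. - apply astarD. - apply astarZ.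
  - apply astarK. - apply astarM.
Defined.

Lemma sub_val_ahom : is_ahom (fun u : sub_star_alg => proj1_sig u).
Proof. split; [split|]; intros; reflexivity. Qed.
End SubStarAlg.

Section AlternatingWords.
Variables (FP : FreeProduct) (A : StarAlg).
Notation F := (fp FP A A).

Inductive alt_span : F -> Prop :=
| alt_span0 : alt_span azero
| alt_span_word : forall x0 l, alternating x0 l -> alt_span (wprod FP x0 l)
| alt_span_add : forall x y, alt_span x -> alt_span y -> alt_span (aadd x y)
| alt_span_opp : forall x, alt_span x -> alt_span (aopp x)
| alt_span_scal : forall a x, alt_span x -> alt_span (ascal a x).

Lemma alt_span_letter (x0 : bool * A) : alt_span (fp_inj FP x0).
Proof. exact (@alt_span_word x0 nil I). Qed.

Lemma fp_inj_mul (x0 y0 : bool * A) : fst x0 = fst y0 ->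
  amul (fp_inj FP x0) (fp_inj FP y0) = fp_inj FP (fst x0, amul (snd x0) (snd y0)).
Proof.
  destruct x0 as [[|] a], y0 as [b a']; simpl; intros <-; unfold fp_inj; simpl; symmetry.
  - apply (proj2 (proj1 (fp_i1_shom FP A A))).
  - apply (proj2 (proj1 (fp_i2_shom FP A A))).
Qed.

Lemma fp_inj_star (x0 : bool * A) : astar (fp_inj FP x0) = fp_inj FP (fst x0, astar (snd x0)).
Proof.
  destruct x0 as [[|] a]; unfold fp_inj; simpl; symmetry.
  - apply (proj2 (fp_i1_shom FP A A)).
  - apply (proj2 (fp_i2_shom FP A A)).
Qed.

(* A letter either merges with the first letter of the word or extends it. *)
Lemma alt_span_mul_letter (x0 : bool * A) z : alt_span z -> alt_span (amul (fp_inj FP x0) z).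
Proof.
  induction 1 as [| y0 l Hl | | |].
  - rewrite amulr0; constructor.
  - destruct (Bool.bool_dec (fst x0) (fst y0)) as [e|n].
    + destruct l as [|y l]; simpl.
      * rewrite fp_inj_mul by exact e. apply alt_span_letter.
      * rewrite amulA, fp_inj_mul by exact e.
        change (alt_span (wprod FP (fst x0, amul (snd x0) (snd y0)) (y :: l))).
        apply alt_span_word. simpl in Hl |- *. rewrite e. exact Hl.
    + change (alt_span (wprod FP x0 (y0 :: l))). apply alt_span_word. split; assumption.
  - rewrite amulDr; constructor; assumption.
  - rewrite amulrN; constructor; assumption.
  - rewrite amulZr; constructor; assumption.
Qed.

Lemma alt_span_mul x z : alt_span x -> alt_span z -> alt_span (amul x z).
Proof.
  intros Hx Hz; induction Hx as [| x0 l _ | | |].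
  - rewrite amul0r; constructor.
  - revert x0; induction l as [|y l IH]; intro x0; simpl.
    + apply alt_span_mul_letter; exact Hz.
    + rewrite <- amulA. apply alt_span_mul_letter, IH.
  - rewrite amulDl; constructor; assumption.
  - rewrite amulNr; constructor; assumption.
  - rewrite amulZl; constructor; assumption.
Qed.

Lemma alt_span_star x : alt_span x -> alt_span (astar x).
Proof.
  assert (star_add : forall x y : F, astar (aadd x y) = aadd (astar x) (astar y))
    by (intros; apply astarD).
  induction 1 as [| x0 l _ | | |].
  - rewrite (additive0 star_add); constructor.
  - revert x0; induction l as [|y l IH]; intro x0; simpl.
    + rewrite fp_inj_star. apply alt_span_letter.
    + rewrite astarM. apply alt_span_mul; [apply IH|].
      rewrite fp_inj_star. apply alt_span_letter.
  - rewrite astarD; constructor; assumption.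
  - rewrite (additiveN star_add); constructor; assumption.
  - rewrite astarZ; constructor; assumption.
Qed.

(* The span is a *-subalgebra containing both copies of A; by the uniqueness part of the
   universal property, the identity factors through it. *)
Lemma alt_span_all x : alt_span x.
Proof.
  set (S := sub_star_alg alt_span0 alt_span_add alt_span_opp alt_span_scal
                         alt_span_mul alt_span_star).
  set (j1 := fun a : A => exist alt_span (fp_i1 A a) (alt_span_letter (true, a)) : S).
  set (j2 := fun a : A => exist alt_span (fp_i2 A a) (alt_span_letter (false, a)) : S).
  destruct (fp_i1_shom FP A A) as [Hi1 _], (fp_i2_shom FP A A) as [Hi2 _].
  assert (Hj1 : is_ahom j1).
  { destruct Hi1 as [[h1 h2] h3]. split; [split|]; intros; apply sub_val_inj; simpl; auto. }
  assert (Hj2 : is_ahom j2).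
  { destruct Hi2 as [[h1 h2] h3]. split; [split|]; intros; apply sub_val_inj; simpl; auto. }
  set (g := fun y : F => proj1_sig (fp_copair j1 j2 y)).
  assert (Hg : is_ahom g)
    by exact (is_ahom_comp (fp_copair_ahom FP Hj1 Hj2) (sub_val_ahom _ _ _ _ _ _)).
  assert (Eg : g x = fp_copair (fp_i1 A) (fp_i2 A) x).
  { apply fp_copair_uniq; auto; intro a; unfold g;
    [rewrite fp_copair_i1 | rewrite fp_copair_i2]; auto. }
  assert (Eid : x = fp_copair (fp_i1 A) (fp_i2 A) x)
    by exact (fp_copair_uniq (g := fun y => y) Hi1 Hi2 (is_ahom_id F)
                (fun _ => eq_refl) (fun _ => eq_refl) x).
  rewrite Eid, <- Eg. apply proj2_sig.
Qed.
End AlternatingWords.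

Section FreeProductMaps.
Variable FP : FreeProduct.

Lemma fpmap_ahom (A1 A2 D1 D2 : StarAlg) (j1 : A1 -> D1) (j2 : A2 -> D2) :
  is_ahom j1 -> is_ahom j2 -> is_ahom (@fpmap FP A1 A2 D1 D2 j1 j2).
Proof.
  intros H1 H2. apply (fp_copair_ahom FP).
  - exact (is_ahom_comp H1 (proj1 (fp_i1_shom FP D1 D2))).
  - exact (is_ahom_comp H2 (proj1 (fp_i2_shom FP D1 D2))).
Qed.

Lemma fpmap_wprod (A D : StarAlg) (j : A -> D) : is_ahom j ->
  forall x0 l, @fpmap FP A A D D j j (wprod FP x0 l)
     = wprod FP (fst x0, j (snd x0)) (map (fun y => (fst y, j (snd y))) l).
Proof.
  intro Hj.
  assert (Hj1 := is_ahom_comp Hj (proj1 (fp_i1_shom FP D D))).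
  assert (Hj2 := is_ahom_comp Hj (proj1 (fp_i2_shom FP D D))).
  assert (letter : forall x0, fpmap j j (fp_inj FP x0) = fp_inj FP (fst x0, j (snd x0))).
  { intros [[|] a]; unfold fp_inj, fpmap; simpl;
    [apply fp_copair_i1 | apply fp_copair_i2]; assumption. }
  intros x0 l; revert x0; induction l as [|y l IH]; intro x0; simpl.
  - apply letter.
  - rewrite (proj2 (fpmap_ahom Hj Hj)), letter, IH. reflexivity.
Qed.

Lemma fpmap_fp_linmap_cancel (A D : StarAlg) (j : A -> D) (k : D -> A)
  (L : fp FP A A -> fp FP D D) :
  is_fp_linmap j L -> is_ahom k -> (forall a, k (j a) = a) ->
  forall x, fpmap k k (L x) = x.
Proof.
  intros [[L1 L2] Lw] Hk kj.
  destruct (fpmap_ahom Hk Hk) as [[G1 G2] _].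
  assert (map_kj : forall l : list (bool * A),
     map (fun y => (fst y, k (snd y))) (map (fun y => (fst y, j (snd y))) l) = l).
  { induction l as [|[b a] l IH]; simpl; [|rewrite kj, IH]; reflexivity. }
  intro x; induction (alt_span_all x) as [| x0 l Hl | | |].
  - rewrite (additive0 L1). exact (additive0 G1).
  - rewrite Lw, fpmap_wprod by assumption. simpl.
    rewrite kj, map_kj. destruct x0; reflexivity.
  - rewrite L1, G1; congruence.
  - rewrite (additiveN L1), (additiveN G1); congruence.
  - rewrite L2, G2; congruence.
Qed.
End FreeProductMaps.

Lemma tensor_mult_intertwines_comul (FP : FreeProduct) (B : StarAlg)
  (Delta : B -> fp FP B B) (T : TensorAlg B)
  (L : fp FP B B -> fp FP (TA T) (TA T)) (TDelta : TA T -> fp FP (TA T) (TA T))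
  (M : TA T -> B) :
  is_ahom Delta -> is_fp_linmap (t_i T) L -> is_ahom TDelta ->
  (forall b, TDelta (t_i T b) = L (Delta b)) ->
  is_ahom M -> (forall b, M (t_i T b) = b) ->
  forall t, fpmap M M (TDelta t) = Delta (M t).
Proof.
  intros HDelta HL HTD TD_i HM M_i t.
  rewrite (t_ext_uniq (g := fun t => fpmap M M (TDelta t)) (proj1 HDelta)).
  - symmetry. apply (t_ext_uniq (proj1 HDelta) (is_ahom_comp HM HDelta)).
    intro b; simpl; rewrite M_i; reflexivity.
  - exact (is_ahom_comp HTD (fpmap_ahom FP HM HM)).
  - intro b; simpl. rewrite TD_i. exact (fpmap_fp_linmap_cancel HL HM M_i _).
Qed.

Lemma Cx_eq (a b : Cx) : Cre a = Cre b -> Cim a = Cim b -> a = b.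
Proof. destruct a, b; simpl; intros -> ->; reflexivity. Qed.

Lemma lfunc0 (A : StarAlg) (f : A -> Cx) : is_lfunc f -> f azero = C0.
Proof.
  intros [H _]. assert (E := H azero azero). rewrite aadd0 in E.
  destruct (f azero) as [r i]; unfold Cadd in E; simpl in E. injection E; intros.
  apply Cx_eq; simpl; lra.
Qed.

Lemma lfunc_scale (A : StarAlg) (f : A -> Cx) c :
  is_lfunc f -> is_lfunc (fun x => Cmul c (f x)).
Proof.
  intros [H1 H2]; split; intros.
  - rewrite H1. destruct c, (f x), (f y); apply Cx_eq; simpl; ring.
  - rewrite H2. destruct c, a, (f x); apply Cx_eq; simpl; ring.
Qed.

Section Convolution.
Variables (FP : FreeProduct) (I : Independence FP).

Lemma conv_lfunc (B : StarAlg) (Delta : B -> fp FP B B) p1 p2 :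
  is_linear Delta -> is_lfunc p1 -> is_lfunc p2 -> is_lfunc (conv I Delta p1 p2).
Proof.
  intros [D1 D2] H1 H2. destruct (odot_lfunc I H1 H2) as [O1 O2].
  unfold conv; split; intros; [rewrite D1, O1 | rewrite D2, O2]; reflexivity.
Qed.

Lemma cpow_lfunc (B : StarAlg) (Delta : B -> fp FP B B) n p :
  is_linear Delta -> is_lfunc p -> is_lfunc (cpow I Delta n p).
Proof. intros HD Hp; induction n; simpl; [|apply conv_lfunc]; assumption. Qed.

Lemma Ccv_const (c : Cx) : Ccv (fun _ => c) c.
Proof.
  split; intros e He; exists 0%nat; intros; unfold R_dist;
  rewrite Rminus_diag, Rabs_R0; exact He.
Qed.

Lemma exp_star_lim (B : StarAlg) (Delta : B -> fp FP B B) p b l :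
  Ccv (exp_seq I Delta p b) l -> exp_star I Delta p b = l.
Proof.
  intro Hl. unfold exp_star.
  destruct (epsilon_spec (inhabits C0) _ (ex_intro _ l Hl)) as [E1 E2].
  destruct Hl as [L1 L2].
  apply Cx_eq; [exact (UL_sequence _ _ _ E1 L1) | exact (UL_sequence _ _ _ E2 L2)].
Qed.

Lemma exp_star0 (B : StarAlg) (Delta : B -> fp FP B B) psi :
  is_linear Delta -> is_lfunc psi -> exp_star I Delta psi azero = C0.
Proof.
  intros HD Hpsi. apply exp_star_lim.
  replace (exp_seq I Delta psi azero) with (fun _ : nat => C0) by
    (extensionality n; symmetry; apply lfunc0, cpow_lfunc, lfunc_scale; assumption).
  apply Ccv_const.
Qed.

Section Naturality.
Variables (A B : StarAlg) (DeltaA : A -> fp FP A A) (DeltaB : B -> fp FP B B) (K : A -> B).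
Hypothesis HK : is_ahom K.
Hypothesis HDeltaB : is_linear DeltaB.
Hypothesis K_comul : forall a, fpmap K K (DeltaA a) = DeltaB (K a).

Lemma conv_comp p1 p2 : is_lfunc p1 -> is_lfunc p2 ->
  forall a, conv I DeltaA (fun x => p1 (K x)) (fun x => p2 (K x)) a = conv I DeltaB p1 p2 (K a).
Proof.
  intros H1 H2 a. unfold conv. rewrite (odot_A3 I HK HK H1 H2), K_comul. reflexivity.
Qed.

Lemma cpow_comp n p : is_lfunc p ->
  forall a, cpow I DeltaA n (fun x => p (K x)) a = cpow I DeltaB n p (K a).
Proof.
  intro Hp; induction n as [|n IH]; intro a; simpl; [reflexivity|].
  replace (cpow I DeltaA n (fun x => p (K x))) with (fun x => cpow I DeltaB n p (K x))
    by (extensionality x; symmetry; apply IH).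
  apply conv_comp; [apply cpow_lfunc|]; assumption.
Qed.

Lemma exp_star_comp psi : is_lfunc psi ->
  forall a, exp_star I DeltaA (fun x => psi (K x)) a = exp_star I DeltaB psi (K a).
Proof.
  intros Hpsi a. unfold exp_star.
  replace (exp_seq I DeltaA (fun x => psi (K x)) a) with (exp_seq I DeltaB psi (K a));
    [reflexivity|].
  extensionality n. symmetry. exact (cpow_comp n (lfunc_scale _ Hpsi) a).
Qed.
End Naturality.
End Convolution.

Theorem mainTheorem6 (FP : FreeProduct) (I : Independence FP)
  (B : StarAlg) (Delta : B -> fp FP B B) (HDelta : is_dual_semigroup Delta)
  (T : TensorAlg B)
  (LiB : fp FP B B -> fp FP (TA T) (TA T)) (HLiB : is_fp_linmap (t_i T) LiB)
  (TDelta : TA T -> fp FP (TA T) (TA T)) (HTD1 : is_shom TDelta)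
  (HTD2 : forall b, TDelta (t_i T b) = LiB (Delta b))
  (M : TA T -> B) (HM1 : is_ahom M) (HM2 : forall b, M (t_i T b) = b)
  (phi1 phi2 psi : B -> Cx)
  (Hphi1 : is_lfunc phi1) (Hphi2 : is_lfunc phi2) (Hpsi : is_lfunc psi) :
  (forall t, conv I TDelta (fun x => phi1 (M x)) (fun x => phi2 (M x)) t
             = conv I Delta phi1 phi2 (M t)) /\
  (forall t, exp_star I TDelta (fun x => psi (M x)) t = exp_star I Delta psi (M t)) /\
  (forall t, M t = azero -> exp_star I TDelta (fun x => psi (M x)) t = C0).
Proof.
  destruct HDelta as [[HDa _] _].
  assert (M_comul := tensor_mult_intertwines_comul HDa HLiB (proj1 HTD1) HTD2 HM1 HM2).
  split; [|split].
  - exact (conv_comp I HM1 M_comul Hphi1 Hphi2).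
  - exact (exp_star_comp I HM1 (proj1 HDa) M_comul Hpsi).
  - intros t Ht.
    rewrite (exp_star_comp I HM1 (proj1 HDa) M_comul Hpsi), Ht.
    exact (exp_star0 I (proj1 HDa) Hpsi).
Qed.
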